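(* For every integer $g \geq 1$, the matching number (the maximum cardinality of a matching) of the graph $\mathcal{F}_g$ is $\frac{4^g+8}{6}$.
   Context: The graphs $\mathcal{F}_g$, $g\ge 1$, are defined recursively. $\mathcal{F}_1$ is the 4-cycle (quadrangle). For $g>1$, $\mathcal{F}_g$ is obtained from $\mathcal{F}_{g-1}$ by replacing every edge $\{v_i,v_j\}$ of $\mathcal{F}_{g-1}$ by a quadrangle in which $v_i$ and $v_j$ are diagonal vertices: the edge $\{v_i,v_j\}$ is deleted, two new vertices $w,w'$ are added, and the four edges $\{v_i,w\},\{w,v_j\},\{v_i,w'\},\{w',v_j\}$ are added. Thus $\mathcal{F}_g$ has $\frac{2}{3}(4^g+2)$ vertices and $4^g$ edges. A matching is a set of edges no two of which share a vertex. *)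

From mathcomp Require Import all_boot.
Set Implicit Arguments. Unset Strict Implicit. Unset Printing Implicit Defensive.

(* A finite graph given by its number of vertices n (vertices 0..n-1)
   and its list of edges (pairs of vertices). *)
Record graph := Graph { nverts : nat; edges : seq (nat * nat) }.

Definition quadrangle : graph :=
  Graph 4 [:: (0, 1); (1, 2); (2, 3); (3, 0)].

(* Replace the k-th edge {a,b} by a quadrangle a - w - b - w' - a with
   fresh vertices w = n + 2k, w' = n + 2k + 1 (the edge {a,b} is deleted). *)
Definition replace_edges (G : graph) : graph :=
  let n := nverts G in
  let E := edges G in
  Graph (n + 2 * size E)
    (flatten [seq let e := nth (0, 0) E k in
                  [:: (e.1, n + 2 * k); (n + 2 * k, e.2);
                      (e.1, (n + 2 * k).+1); ((n + 2 * k).+1, e.2)]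
             | k <- iota 0 (size E)]).

(* F g for g >= 1: F 1 = quadrangle, F (g+1) = replace_edges (F g).
   (F 0 is set to the quadrangle as well; it is never used.) *)
Fixpoint F_aux (h : nat) : graph :=
  if h is h'.+1 then replace_edges (F_aux h') else quadrangle.
Definition F (g : nat) : graph := F_aux g.-1.

Definition is_matching (G : graph) (M : {set 'I_(size (edges G))}) : bool :=
  [forall i in M, forall j in M, (i != j) ==>
     let ei := nth (0, 0) (edges G) i in
     let ej := nth (0, 0) (edges G) j in
     [&& ei.1 != ej.1, ei.1 != ej.2, ei.2 != ej.1 & ei.2 != ej.2]].

Definition matching_number (G : graph) : nat :=
  \max_(M : {set 'I_(size (edges G))} | is_matching M) #|M|.

(** Every edge of [replace_edges G] joins an old vertex of [G] to one of the
    two new vertices of its quadrangle, so the old vertices form a vertex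
    cover and a matching has at most [nverts G] edges.  Conversely, if no
    vertex of [G] is isolated, each old vertex [v] can be matched to a new
    vertex of the quadrangle replacing the first edge incident to [v]; two old
    vertices never pick the same new vertex, since the first new vertex of a
    quadrangle is only picked by its first endpoint and the second one only by
    its second endpoint.  Hence the matching number of [F (g+1)] is the number
    [(2 * 4^g + 4) / 3] of vertices of [F g]. *)
From mathcomp Require Import all_boot zify.
Set Implicit Arguments. Unset Strict Implicit. Unset Printing Implicit Defensive.

Definition incident (v : nat) (e : nat * nat) : bool := (e.1 == v) || (e.2 == v).

Definition edges_disjoint (e e' : nat * nat) : bool :=
  [&& e.1 != e'.1, e.1 != e'.2, e.2 != e'.1 & e.2 != e'.2].

Lemma incident_edges_disjoint v e e' :
  incident v e -> incident v e' -> ~~ edges_disjoint e e'.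
Proof.
by rewrite /incident /edges_disjoint => /orP[]/eqP-> /orP[]/eqP->;
  rewrite eqxx ?andbF.
Qed.

Lemma is_matchingP (G : graph) (M : {set 'I_(size (edges G))}) :
  reflect {in M &, forall i j : 'I__, i != j ->
             edges_disjoint (nth (0, 0) (edges G) i) (nth (0, 0) (edges G) j)}
          (is_matching M).
Proof.
apply: (iffP idP) => [HM i j iM jM ij | HM].
  by move/forallP: HM => /(_ i); rewrite iM => /forallP /(_ j); rewrite jM ij.
apply/forallP => i; apply/implyP => iM; apply/forallP => j; apply/implyP => jM.
by apply/implyP; apply: HM.
Qed.

Lemma matching_number_le_cover (G : graph) (C : seq nat) :
  (forall e, e \in edges G -> (e.1 \in C) || (e.2 \in C)) ->
  matching_number G <= size C.
Proof.
move=> cover; apply/bigmax_leqP => M /is_matchingP HM.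
pose e_ (i : 'I_(size (edges G))) := nth (0, 0) (edges G) i.
have e_mem i : e_ i \in edges G by exact: mem_nth.
pose label i := if (e_ i).1 \in C then (e_ i).1 else (e_ i).2.
have label_incident i : incident (label i) (e_ i).
  by rewrite /label /incident; case: ifP; rewrite eqxx ?orbT.
rewrite cardE -(size_map label); apply: uniq_leq_size.
  rewrite map_inj_in_uniq ?enum_uniq // => i j; rewrite !mem_enum => iM jM lij.
  apply/eqP/negPn/negP => ij; move: (HM _ _ iM jM ij).
  by apply/negP/(incident_edges_disjoint (label_incident i)); rewrite lij.
move=> _ /mapP[i _ ->]; rewrite /label; case: ifP => [//|/negbT notC1].
by have := cover _ (e_mem i); rewrite (negbTE notC1).
Qed.

Lemma leq_matching_number (G : graph) m (f : nat -> nat * nat) :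
  (forall v, v < m -> f v \in edges G) ->
  (forall u v, u < m -> v < m -> u != v -> edges_disjoint (f u) (f v)) ->
  m <= matching_number G.
Proof.
move=> f_mem f_disj.
have f_idx (v : 'I_m) : index (f v) (edges G) < size (edges G).
  by rewrite index_mem f_mem.
pose phi v := Ordinal (f_idx v).
have nth_phi v : nth (0, 0) (edges G) (phi v) = f v by rewrite nth_index ?f_mem.
have phi_inj : injective phi.
  move=> u v /(congr1 (fun i : 'I__ => nth (0, 0) (edges G) i)).
  rewrite !nth_phi => fuv; apply/val_inj/eqP/negPn/negP => uv.
  by move: (f_disj _ _ (ltn_ord u) (ltn_ord v) uv); rewrite fuv /edges_disjoint eqxx.
rewrite -[m in m <= _]card_ord -(card_imset 'I_m phi_inj).
apply: leq_bigmax_cond; apply/is_matchingP => _ _ /imsetP[u _ ->] /imsetP[v _ ->] uv.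
rewrite !nth_phi; apply: f_disj; rewrite ?ltn_ord //.
by apply: contraNneq uv => /val_inj ->.
Qed.

Lemma matching_number_quadrangle : matching_number quadrangle = 2.
Proof.
apply/eqP; rewrite eqn_leq; apply/andP; split.
  apply: (@matching_number_le_cover _ [:: 1; 3]) => e.
  by rewrite !inE => /or4P[]/eqP->.
apply: (@leq_matching_number _ _ (fun v => if v is 0 then (0, 1) else (2, 3))).
  by case=> [|[|]].
by move=> [|[|u]] [|[|v]].
Qed.

Definition quad_gadget (e : nat * nat) (w : nat) : seq (nat * nat) :=
  [:: (e.1, w); (w, e.2); (e.1, w.+1); (w.+1, e.2)].

Definition vertex_bounded (G : graph) : bool :=
  all (fun e => (e.1 < nverts G) && (e.2 < nverts G)) (edges G).

Definition no_isolated_vertex (G : graph) : bool :=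
  all (fun v => has (incident v) (edges G)) (iota 0 (nverts G)).

Section ReplaceEdges.

Variable G : graph.
Local Notation n := (nverts G).
Local Notation E := (edges G).

Lemma replace_edgesP e :
  reflect (exists2 k, k < size E & e \in quad_gadget (nth (0, 0) E k) (n + 2 * k))
          (e \in edges (replace_edges G)).
Proof.
apply: (iffP flattenP) => [[s /mapP[k]] | [k k_lt e_in]].
  by rewrite mem_iota add0n => /andP[_ k_lt] -> e_in; exists k.
exists (quad_gadget (nth (0, 0) E k) (n + 2 * k)) => //.
by apply/mapP; exists k; rewrite // mem_iota add0n.
Qed.

Lemma size_edges_replace_edges : size (edges (replace_edges G)) = 4 * size E.
Proof.
suff size_gadgets s : size (flatten
    [seq quad_gadget (nth (0, 0) E k) (n + 2 * k) | k <- s]) = 4 * size s.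
  by rewrite size_gadgets size_iota.
by elim: s => //= k s IH; rewrite IH mulnS.
Qed.

Lemma vertex_bounded_replace_edges :
  vertex_bounded G -> vertex_bounded (replace_edges G).
Proof.
move=> /allP bounded; apply/allP => e /replace_edgesP[k k_lt].
move: (bounded _ (mem_nth (0, 0) k_lt)); case: (nth _ _ _) => a b /= /andP[a_lt b_lt].
by rewrite !inE => /or4P[]/eqP-> /=; apply/andP; split; lia.
Qed.

Lemma no_isolated_vertex_replace_edges :
  no_isolated_vertex G -> no_isolated_vertex (replace_edges G).
Proof.
move=> /allP covered; apply/allP => v; rewrite mem_iota add0n /= => v_lt.
have [v_old | v_new] := ltnP v n.
  have /hasP[e e_in ve] : has (incident v) E by rewrite covered ?mem_iota.
  have [k k_lt e_def] : exists2 k, k < size E & e = nth (0, 0) E k.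
    by exists (index e E); rewrite ?index_mem ?nth_index.
  move: ve; rewrite /incident e_def => /orP[]/eqP <-.
    apply/hasP; exists ((nth (0, 0) E k).1, n + 2 * k); last by rewrite /incident eqxx.
    by apply/replace_edgesP; exists k; rewrite // inE eqxx.
  apply/hasP; exists (n + 2 * k, (nth (0, 0) E k).2); last by rewrite /incident eqxx orbT.
  by apply/replace_edgesP; exists k; rewrite // !inE eqxx orbT.
pose k := (v - n) %/ 2.
have k_lt : k < size E by rewrite /k; lia.
have [->|->] : v = n + 2 * k \/ v = (n + 2 * k).+1 by rewrite /k; lia.
  apply/hasP; exists (n + 2 * k, (nth (0, 0) E k).2); last by rewrite /incident eqxx.
  by apply/replace_edgesP; exists k; rewrite // !inE eqxx orbT.
apply/hasP; exists ((n + 2 * k).+1, (nth (0, 0) E k).2); last by rewrite /incident eqxx.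
by apply/replace_edgesP; exists k; rewrite // !inE eqxx !orbT.
Qed.

Lemma matching_number_replace_edges_le :
  vertex_bounded G -> matching_number (replace_edges G) <= n.
Proof.
move=> /allP bounded; rewrite -[n in _ <= n](size_iota 0).
apply: matching_number_le_cover => e /replace_edgesP[k k_lt].
move: (bounded _ (mem_nth (0, 0) k_lt)); case: (nth _ _ _) => a b /= /andP[a_lt b_lt].
by rewrite !inE => /or4P[]/eqP-> /=; rewrite !mem_iota; lia.
Qed.

Hypothesis covered : no_isolated_vertex G.

Let first_edge v := find (incident v) E.
Let e_ v := nth (0, 0) E (first_edge v).
Let partner v := n + 2 * first_edge v + ((e_ v).1 != v).
Let matched_edge v := if (e_ v).1 == v then (v, partner v) else (partner v, v).

Lemma first_edge_lt v : v < n -> first_edge v < size E.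
Proof. by move=> v_lt; rewrite -has_find (allP covered) ?mem_iota. Qed.

Lemma incident_first_edge v : v < n -> incident v (e_ v).
Proof. by move=> v_lt; apply: nth_find; rewrite has_find first_edge_lt. Qed.

Lemma partner_inj u v : u < n -> v < n -> partner u = partner v -> u = v.
Proof.
move=> u_lt v_lt eq_p.
have same_edge : first_edge u = first_edge v.
  by move: eq_p; rewrite /partner; case: (_ != u); case: (_ != v) => /=; lia.
have same_side : ((e_ u).1 != u) = ((e_ v).1 != v).
  by move: eq_p; rewrite /partner same_edge; case: (_ != u); case: (_ != v) => /=; lia.
move: same_side (incident_first_edge u_lt) (incident_first_edge v_lt).
rewrite /e_ -same_edge /incident; case: (nth _ _ _) => a b /=.
by case: (eqVneq a u) => [<-|au]; case: (eqVneq a v) => [<-|av] //= _ /eqP<- /eqP.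
Qed.

Lemma matched_edge_mem v : v < n -> matched_edge v \in edges (replace_edges G).
Proof.
move=> v_lt; apply/replace_edgesP; exists (first_edge v); first exact: first_edge_lt.
move: (incident_first_edge v_lt); rewrite /matched_edge /partner /incident -/(e_ v).
case: eqP => [e1 _|_ /= /eqP e2] /=; first by rewrite addn0 inE e1 eqxx.
by rewrite addn1 !inE e2 eqxx !orbT.
Qed.

Lemma matched_edges_disjoint u v : u < n -> v < n -> u != v ->
  edges_disjoint (matched_edge u) (matched_edge v).
Proof.
move=> u_lt v_lt uv.
have partner_neq : partner u != partner v.
  by apply: contra uv => /eqP/(partner_inj u_lt v_lt)->.
have partner_ge w : n <= partner w by rewrite /partner; lia.
move: (partner_ge u) (partner_ge v) partner_neq.
rewrite /matched_edge /edges_disjoint.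
by case: ifP => _; case: ifP => _ /=; lia.
Qed.

Lemma leq_matching_number_replace_edges : n <= matching_number (replace_edges G).
Proof.
apply: (@leq_matching_number _ _ matched_edge); first exact: matched_edge_mem.
exact: matched_edges_disjoint.
Qed.

End ReplaceEdges.

Lemma matching_number_replace_edges (G : graph) :
  vertex_bounded G -> no_isolated_vertex G ->
  matching_number (replace_edges G) = nverts G.
Proof.
move=> bounded covered; apply/eqP; rewrite eqn_leq.
by rewrite matching_number_replace_edges_le // leq_matching_number_replace_edges.
Qed.

Lemma vertex_bounded_F_aux h : vertex_bounded (F_aux h).
Proof. by elim: h => [|h IH] //; apply: vertex_bounded_replace_edges. Qed.

Lemma no_isolated_vertex_F_aux h : no_isolated_vertex (F_aux h).
Proof. by elim: h => [|h IH] //; apply: no_isolated_vertex_replace_edges. Qed.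

Lemma size_edges_F_aux h : size (edges (F_aux h)) = 4 ^ h.+1.
Proof.
by elim: h => [|h IH] //; rewrite (size_edges_replace_edges (F_aux h)) IH (expnS 4 h.+1).
Qed.

Lemma nverts_F_aux h : 3 * nverts (F_aux h) = 2 * 4 ^ h.+1 + 4.
Proof.
elim: h => [|h IH] //.
have -> : nverts (F_aux h.+1) = nverts (F_aux h) + 2 * size (edges (F_aux h)) by [].
by rewrite size_edges_F_aux (expnS 4 h.+1); lia.
Qed.

Theorem theorem1 (g : nat) : 1 <= g -> 6 * matching_number (F g) = 4 ^ g + 8.
Proof.
case: g => [|[|h]] // _; first by rewrite matching_number_quadrangle.
have -> : F h.+2 = replace_edges (F_aux h) by [].
rewrite matching_number_replace_edges ?vertex_bounded_F_aux ?no_isolated_vertex_F_aux //.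
by have := nverts_F_aux h; rewrite (expnS 4 h.+1); lia.
Qed.
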